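(* Let $m$ be a non-negative integer, let $A$ be a $k$-tuple of elements of $\mathbb{Z}/m\mathbb{Z}$ and let $\lambda,p$ be positive integers with $k\mid p$. Then the orbit of $S=\mathrm{IAP}(A,AX_k)$ is $(p,\lambda p)$-periodic if and only if $\pi_{m/\gcd(p/k,m)}(AX_k)=0$ and $A\in\mathrm{Lker}_m M_k^{(\lambda p)}$, where $M_k^{(\lambda p)}=W_k^{(\lambda p)}+X_kT_k^{(\lambda p)}$ and $W_k^{(\lambda p)}=C_k^{(\lambda p)}+(-1)^{\lambda p+1}I_k$.
   Context: $\mathbb{Z}/0\mathbb{Z}=\mathbb{Z}$. For $d\mid m$, $\pi_d$ is reduction from $\mathbb{Z}/m\mathbb{Z}$ to $\mathbb{Z}/d\mathbb{Z}$, entrywise. Tuples are row vectors and integer matrices act after reduction mod $m$. $X_k=(\delta_{r,s}+\delta_{r,k-s+1})_{1\le r,s\le k}$. For $k$-tuples $A=(a_0,\dots,a_{k-1})$, $D=(d_0,\dots,d_{k-1})$, $\mathrm{IAP}(A,D)=(u_j)_{j\in\mathbb{Z}}$ with $u_{qk+r}=a_r+qd_r$. The orbit of $(u_j)_{j\in\mathbb{Z}}$ is $(a_{i,j})_{(i,j)\in\mathbb{N}\times\mathbb{Z}}$ with $a_{0,j}=u_j$, $a_{i,j}=-a_{i-1,j}-a_{i-1,j+1}$; it is $(p,q)$-periodic if $a_{i+q,j}=a_{i,j+p}=a_{i,j}$ for all $(i,j)$. $C_k^{(i)}=\big(\sum_{\alpha\in\mathbb{Z}}\binom{i}{\alpha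 k+r-s}\big)_{1\le r,s\le k}$, $T_k^{(i)}=\big(\sum_{\alpha\in\mathbb{Z}}\alpha\binom{i}{\alpha k+r-s}\big)_{1\le r,s\le k}$ with $\binom{a}{b}=0$ if $b<0$ or $b>a$. $\mathrm{Lker}_m M=\{X\in(\mathbb{Z}/m\mathbb{Z})^{n}: X\pi_m(M)=0\}$. *)

(* Elements of Z/mZ (m >= 0, Z/0Z = Z) are represented by
   integer representatives; equality in Z/mZ is congruence modulo m
   (intdiv's (_ = _ %[mod m])%Z, which for m = 0 is equality in Z). *)
From mathcomp Require Import all_boot all_order all_algebra.
Set Implicit Arguments. Unset Strict Implicit. Unset Printing Implicit Defensive.
Import Order.TTheory GRing.Theory Num.Theory.
Local Open Scope ring_scope.

Definition rv_at (k : nat) (A : 'rV[int]_k) (r : nat) : int :=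
  match insub r with Some i => A 0 i | None => 0 end.

Definition IAP (k : nat) (A D : 'rV[int]_k) (j : int) : int :=
  rv_at A `|(j %% k)%Z|%N + (j %/ k)%Z * rv_at D `|(j %% k)%Z|%N.

Fixpoint orbitA (u : int -> int) (i : nat) (j : int) : int :=
  match i with
  | 0%N => u j
  | i'.+1 => - orbitA u i' j - orbitA u i' (j + 1)
  end.

Definition periodic (m : nat) (a : nat -> int -> int) (p q : nat) : Prop :=
  forall (i : nat) (j : int),
    (a (i + q)%N j = a i j %[mod (m : int)])%Z /\
    (a i (j + (p : int)) = a i j %[mod (m : int)])%Z.

(* X_k = (delta_{r,s} + delta_{r,k-s+1}), 1-indexed; here 0-indexed. *)
Definition Xk (k : nat) : 'M[int]_k :=
  \matrix_(r < k, s < k) (((r == s :> nat) : int) + ((r == (k.-1 - s)%N :> nat) : int)).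

Definition binz (a : nat) (b : int) : int :=
  if b < 0 then 0 else ('C(a, `|b|%N) : int).

(* The sums over alpha in Z are finite; for k >= 1 every alpha with
   0 <= alpha k + r - s <= i lies in [-(i+1), i+1], so we sum over that range. *)
Definition Ck (k i : nat) : 'M[int]_k :=
  \matrix_(r < k, s < k)
    \sum_(t < (2 * i + 3)%N)
      let alpha : int := (t : int) - (i.+1 : int) in
      binz i (alpha * (k : int) + (r : int) - (s : int)).

Definition Tk (k i : nat) : 'M[int]_k :=
  \matrix_(r < k, s < k)
    \sum_(t < (2 * i + 3)%N)
      let alpha : int := (t : int) - (i.+1 : int) in
      alpha * binz i (alpha * (k : int) + (r : int) - (s : int)).

Definition Wk (k i : nat) : 'M[int]_k := Ck k i + ((-1) ^+ i.+1)%:M.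

Definition Mk (k i : nat) : 'M[int]_k := Wk k i + Xk k *m Tk k i.

Definition Lker (m n : nat) (M : 'M[int]_n) (X : 'rV[int]_n) : Prop :=
  forall s : 'I_n, ((X *m M) ord0 s = 0 %[mod (m : int)])%Z.

Definition pi_zero (d n : nat) (X : 'rV[int]_n) : Prop :=
  forall s : 'I_n, (X ord0 s = 0 %[mod (d : int)])%Z.

From mathcomp Require Import all_boot all_order all_algebra.
From mathcomp Require Import zify ring.
Set Implicit Arguments. Unset Strict Implicit. Unset Printing Implicit Defensive.
Import Order.TTheory GRing.Theory Num.Theory.
Local Open Scope ring_scope.

(* The orbit is a_{i,j} = (-1)^i sum_l C(i,l) u_{j+l}.  For 0 <= r < k, sorting the indices
   r + l by quotient and remainder mod k turns the r-th entry of A M_k^(n) into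
   (-1)^n (a_{n,r} - u_r), so A is in Lker_m M_k^(n) iff row n of the orbit agrees with row 0
   on [0,k).  Since row i + n is the orbit of row n, (p,n)-periodicity amounts to
   p-periodicity of u and a_n = u (mod m); and u_{j+p} - u_j = (p/k) d_{j mod k} with
   D = A X_k, which is the pi condition.  Finally u = IAP(A, A X_k) is affine on each residue
   class mod k and satisfies u_{-1-j} = -u_j; both properties pass to the orbit, hence, as n
   is a multiple of the period p, to e = a_n - u mod m.  Such an e vanishing on [0,k) also
   vanishes on [-k,0), hence everywhere. *)

Lemma eqz_modE (d x y : int) : (x = y %[mod d])%Z <-> (d %| x - y)%Z.
Proof. by rewrite -eqz_mod_dvd; split=> [->|/eqP]. Qed.

Lemma orbitA_shift (u : int -> int) (c : int) i j :
  orbitA (fun x => u (x + c)) i j = orbitA u i (j + c).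
Proof. by elim: i j => [|i IH] j //=; rewrite !IH (addrAC j 1 c). Qed.

Lemma orbitA_sub (u v : int -> int) i j :
  orbitA (fun x => u x - v x) i j = orbitA u i j - orbitA v i j.
Proof. by elim: i j => [|i IH] j //=; rewrite !IH; ring. Qed.

Lemma orbitA_addn (u : int -> int) i n j :
  orbitA u (i + n)%N j = orbitA (orbitA u n) i j.
Proof. by elim: i j => [|i IH] j //=; rewrite !IH. Qed.

Lemma orbitA_dvd (m : int) (u : int -> int) i j :
  (forall x, (m %| u x)%Z) -> (m %| orbitA u i j)%Z.
Proof. by move=> mu; elim: i j => [|i IH] j //=; rewrite rpredB ?rpredN. Qed.

Lemma orbitA_periodic_dvd (m c : int) (u : int -> int) :
  (forall x, (m %| u (x + c) - u x)%Z) ->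
  forall i x, (m %| orbitA u i (x + c) - orbitA u i x)%Z.
Proof. by move=> mu i x; rewrite -orbitA_shift -orbitA_sub; apply: orbitA_dvd. Qed.

Lemma periodic_orbitAE (m : nat) (u : int -> int) (p n : nat) :
  periodic m (orbitA u) p n <->
  (forall x : int, (m %| u (x + p) - u x)%Z) /\
  (forall x : int, (m %| orbitA u n x - u x)%Z).
Proof.
split=> [per | [col row] i j].
  by split=> x; apply/eqz_modE; have [] := per 0%N x; rewrite ?add0n.
split; apply/eqz_modE; last exact: orbitA_periodic_dvd.
by rewrite orbitA_addn -orbitA_sub; apply: orbitA_dvd.
Qed.

Lemma periodic_dvd_muln (m : int) (f : int -> int) (p : nat) :
  (forall x : int, (m %| f (x + p) - f x)%Z) ->
  forall c (x : int), (m %| f (x + (c * p)%N) - f x)%Z.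
Proof.
move=> per; elim=> [|c IH] x; first by rewrite mul0n addr0 subrr dvdz0.
have -> : x + (c.+1 * p)%N = x + (c * p)%N + p by rewrite mulSnr PoszD addrA.
by rewrite -(subrK (f (x + (c * p)%N)) (f _)) -addrA rpredD.
Qed.

Lemma sum_binS (x : nat -> int) i :
  \sum_(l < i.+2) 'C(i.+1, l)%:Z * x l =
  \sum_(l < i.+1) 'C(i, l)%:Z * x l + \sum_(l < i.+1) 'C(i, l)%:Z * x l.+1.
Proof.
rewrite big_ord_recl /= bin0.
under eq_bigr => l _ do rewrite /bump /= add1n binS PoszD mulrDl.
rewrite big_split /= addrA; congr (_ + _).
rewrite [X in _ = X]big_ord_recl [X in _ + X = _]big_ord_recr /= bin0.
by rewrite bin_small // mul0r addr0 addrC.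
Qed.

Lemma orbitA_binomial (u : int -> int) i j :
  orbitA u i j = (-1) ^+ i * \sum_(l < i.+1) 'C(i, l)%:Z * u (j + l%:Z).
Proof.
elim: i j => [|i IH] j /=; first by rewrite big_ord1 expr0 mul1r bin0 mul1r addr0.
rewrite !IH exprS (sum_binS (fun l => u (j + l%:Z))).
under [X in _ = _ * (_ + X)]eq_bigr => l _ do rewrite intS addrA.
ring.
Qed.

Definition antisymmetric (f : int -> int) := forall x, f (-1 - x) = - f x.

Lemma orbitA_antisymmetric (u : int -> int) (i : nat) (j : int) :
  antisymmetric u -> orbitA u i (-1 - i%:Z - j) = - orbitA u i j.
Proof.
move=> anti_u; elim: i j => [|i IH] j /=; first by rewrite subr0 anti_u.
have -> : -1 - i.+1%:Z - j = -1 - i%:Z - (j + 1) by lia.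
have -> : -1 - i%:Z - (j + 1) + 1 = -1 - i%:Z - j by ring.
by rewrite !IH; ring.
Qed.

Definition affine_on_classes (c : int) (f : int -> int) :=
  forall x, f (x + c + c) - f (x + c) = f (x + c) - f x.

Lemma orbitA_affine_on_classes (c : int) (u : int -> int) i :
  affine_on_classes c u -> affine_on_classes c (orbitA u i).
Proof.
move=> aff_u; elim: i => [|i IH] x //=.
have -> : x + c + c + 1 = x + 1 + c + c by ring.
have -> : x + c + 1 = x + 1 + c by ring.
move: (IH x) (IH (x + 1)); lia.
Qed.

Lemma periodic_mulz (g : int -> int) (c : int) :
  (forall x, g (x + c) = g x) -> forall x q, g (x + q * c) = g x.
Proof.
move=> per x; elim/int_rec => [|n IH|n IH]; first by rewrite mul0r addr0.
  by rewrite -[in RHS]IH -(per (x + n%:Z * c)); congr g; rewrite intS; ring.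
by rewrite -[in RHS]IH -(per (x + - n.+1%:Z * c)); congr g; rewrite intS; ring.
Qed.

Lemma affine_on_classesE (c : int) (f : int -> int) :
  affine_on_classes c f -> forall x q, f (x + q * c) = f x + q * (f (x + c) - f x).
Proof.
move=> aff x; pose g y := f (y + c) - f y.
have gE q : f (x + q * c + c) = f (x + q * c) + g x.
  rewrite -(@periodic_mulz g c _ x q); first by rewrite /g; ring.
  by move=> y; apply: aff.
elim/int_rec => [|n IH|n IH]; first by rewrite !mul0r !addr0.
  have -> : x + n.+1%:Z * c = x + n%:Z * c + c by rewrite intS; ring.
  by rewrite gE IH /g; ring.
rewrite -[LHS](addrK (g x)) -gE.
have -> : x + - n.+1%:Z * c + c = x + - n%:Z * c by rewrite intS; ring.
by rewrite IH /g intS; ring.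
Qed.

Lemma divz_eq_ord (k : nat) (x : int) : (0 < k)%N ->
  exists (q : int) (s : 'I_k), x = q * k + s.
Proof.
move=> k0; have k_gt0 : 0 < (k : int) by rewrite ltz_nat.
have mod_ge0 : 0 <= (x %% k)%Z by rewrite modz_ge0 ?gt_eqF.
have s_lt : (`|(x %% k)%Z| < k)%N by rewrite -ltz_nat gez0_abs ?ltz_pmod.
by exists (x %/ k)%Z, (Ordinal s_lt); rewrite /= gez0_abs // -divz_eq.
Qed.

Lemma affine_on_classes_dvd (m : int) (k : nat) (f : int -> int) :
  (0 < k)%N -> affine_on_classes k f ->
  (forall s : 'I_k, (m %| f s)%Z /\ (m %| f (s%:Z - k%:Z))%Z) ->
  forall x, (m %| f x)%Z.
Proof.
move=> k0 aff window x; have [q [s ->]] := divz_eq_ord x k0.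
have [fs fsk] := window s.
have -> : q * k + s = s%:Z - k%:Z + (q + 1) * k by ring.
by rewrite affine_on_classesE // subrK rpredD ?dvdz_mull ?rpredB.
Qed.

Lemma orbitA_row_dvd (m : int) (k n : nat) (u : int -> int) :
  (0 < k)%N -> antisymmetric u -> affine_on_classes k u ->
  (forall x : int, (m %| u (x + n) - u x)%Z) ->
  (forall r : 'I_k, (m %| orbitA u n r - u r)%Z) ->
  forall x : int, (m %| orbitA u n x - u x)%Z.
Proof.
move=> k0 anti aff per row; pose e x := orbitA u n x - u x.
have per_e (x : int) : (m %| e (x + n) - e x)%Z.
  have -> : e (x + n) - e x =
      (orbitA u n (x + n) - orbitA u n x) - (u (x + n) - u x) by rewrite /e; ring.
  by rewrite rpredB //; apply: orbitA_periodic_dvd.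
have anti_e (x : int) : (m %| e (-1 - x) + e x)%Z.
  have shiftE : -1 - n%:Z - x + n = -1 - x by ring.
  have -> : e (-1 - x) + e x =
      (e (-1 - n%:Z - x + n) - e (-1 - n%:Z - x)) + (u (-1 - n%:Z - x + n) - u (-1 - n%:Z - x)).
    by rewrite shiftE /e orbitA_antisymmetric // anti; ring.
  by rewrite rpredD.
have aff_e : affine_on_classes k e.
  by move=> x; move: (orbitA_affine_on_classes n aff x) (aff x); rewrite /e; lia.
apply: affine_on_classes_dvd k0 aff_e _ => s; split; first exact: row.
have -> : s%:Z - k%:Z = -1 - (rev_ord s : nat)%:Z by rewrite /=; move: (ltn_ord s); lia.
by rewrite -(rpredDr _ (row (rev_ord s))) anti_e.
Qed.

Lemma rv_at_ord k (a : 'rV[int]_k) (s : 'I_k) : rv_at a s = a 0 s.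
Proof. by rewrite /rv_at valK. Qed.

Lemma IAPE k (A D : 'rV[int]_k) (q : int) (s : 'I_k) :
  IAP A D (q * k + s) = A 0 s + q * D 0 s.
Proof.
have k0 : (k : int) != 0 by case: k {A D} s => [[]|].
have s_small : 0 <= s%:Z < k by rewrite ltz_nat ltn_ord.
by rewrite /IAP modzMDl modz_small // divzMDl // divz_small // addr0 !rv_at_ord.
Qed.

Lemma IAP_nat k (A D : 'rV[int]_k) (j : nat) :
  IAP A D j = rv_at A (j %% k) + (j %/ k)%N%:Z * rv_at D (j %% k).
Proof. by rewrite /IAP modz_nat divz_nat. Qed.

Lemma sum_mul_eq_nat k (F : 'I_k -> int) (t : 'I_k) :
  \sum_(r < k) F r * (r == t :> nat) = F t.
Proof.
rewrite (bigD1 t) //= eqxx mulr1 big1 ?addr0 // => r r_neq_t.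
by case: eqP => [/val_inj r_eq_t | _]; [rewrite r_eq_t eqxx in r_neq_t | rewrite mulr0].
Qed.

Lemma mulmx_XkE n k (B : 'M[int]_(n, k)) i (s : 'I_k) :
  (B *m Xk k) i s = B i s + B i (rev_ord s).
Proof.
rewrite mxE; under eq_bigr => r _ do rewrite mxE mulrDr.
have -> : (k.-1 - s)%N = rev_ord s by rewrite /=; move: (ltn_ord s); lia.
by rewrite big_split !sum_mul_eq_nat.
Qed.

Lemma IAP_affine_on_classes k (A D : 'rV[int]_k) :
  (0 < k)%N -> affine_on_classes k (IAP A D).
Proof.
move=> k0 x; have [q [s ->]] := divz_eq_ord x k0.
have -> : q * k + s + k + k = (q + 2) * k + s by ring.
have -> : q * k + s + k = (q + 1) * k + s by ring.
by rewrite !IAPE; ring.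
Qed.

Lemma IAP_antisymmetric k (A : 'rV[int]_k) :
  (0 < k)%N -> antisymmetric (IAP A (A *m Xk k)).
Proof.
move=> k0 x; have [q [s ->]] := divz_eq_ord x k0.
have -> : -1 - (q * k + s) = (- q - 1) * k + (rev_ord s : nat)%:Z.
  by rewrite /=; move: (ltn_ord s); lia.
by rewrite !IAPE !mulmx_XkE rev_ordK; ring.
Qed.

Lemma IAP_periodic_dvdE (m : int) k (A D : 'rV[int]_k) (N : nat) : (0 < k)%N ->
  (forall x : int, (m %| IAP A D (x + (N * k)%N) - IAP A D x)%Z) <->
  (forall s : 'I_k, (m %| N%:Z * D ord0 s)%Z).
Proof.
move=> k0; have shiftE (q : int) (s : 'I_k) :
    IAP A D (q * k + s + (N * k)%N) - IAP A D (q * k + s) = N%:Z * D ord0 s.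
  have -> : q * k + s + (N * k)%N = (q + N) * k + s by rewrite PoszM; ring.
  by rewrite !IAPE; ring.
split=> [per s | dvdD x]; first by rewrite -(shiftE 0).
by have [q [s ->]] := divz_eq_ord x k0; rewrite shiftE.
Qed.

Lemma dvdn_divn_gcd (m N y : nat) : (0 < N)%N ->
  (m %/ gcdn N m %| y)%N = (m %| N * y)%N.
Proof.
move=> N0; move gE : (gcdn N m) => g.
have g0 : (0 < g)%N by rewrite -gE gcdn_gt0 N0.
have [NE mE] : N = (N %/ g * g)%N /\ m = (m %/ g * g)%N.
  by rewrite !divnK // -gE ?dvdn_gcdl ?dvdn_gcdr.
have cop : coprime (m %/ g) (N %/ g).
  have : (gcdn (N %/ g) (m %/ g) * g = 1 * g)%N by rewrite muln_gcdl -NE -mE mul1n.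
  by rewrite /coprime gcdnC => /eqP; rewrite eqn_pmul2r.
by rewrite {2}mE {1}NE mulnAC dvdn_pmul2r // Gauss_dvdr.
Qed.

Lemma pi_zero_gcdE (m N k : nat) (X : 'rV[int]_k) : (0 < N)%N ->
  pi_zero (m %/ gcdn N m) X <-> forall s : 'I_k, (m %| N%:Z * X ord0 s)%Z.
Proof.
move=> N0; split=> [piX s | dvdX s].
  by move/eqz_modE: (piX s); rewrite subr0 !dvdzE abszM dvdn_divn_gcd.
by apply/eqz_modE; move: (dvdX s); rewrite subr0 !dvdzE abszM dvdn_divn_gcd.
Qed.

Lemma binzE n (b : int) :
  binz n b = \sum_(l < n.+1) if l%:Z == b then ('C(n, l) : int) else 0.
Proof.
rewrite /binz; case: b => [b|b] /=; last by rewrite big1.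
have [b_le_n | n_lt_b] := ltnP b n.+1.
  rewrite (bigD1 (Ordinal b_le_n)) //= eqxx big1 ?addr0 // => l l_neq_b.
  by case: eqP => // -[l_eq_b]; case/eqP: l_neq_b; apply: val_inj.
rewrite big1 ?bin_small // => l _; case: eqP => // -[l_eq_b].
by move: (ltn_ord l); rewrite l_eq_b ltnNge n_lt_b.
Qed.

Lemma eqz_euclid (k r l s : nat) (a : int) : (s < k)%N ->
  (l%:Z == a * k + s - r%:Z) = (a == ((r + l) %/ k)%N) && (s == (r + l) %% k)%N.
Proof.
move=> s_lt_k; have k0 : (0 < k)%N by apply: leq_ltn_trans s_lt_k.
have := divn_eq (r + l) k; have := ltn_pmod (r + l) k0.
move: ((r + l) %/ k)%N ((r + l) %% k)%N => q t t_lt_k rlE.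
apply/eqP/andP => [lE | [/eqP-> /eqP->]]; last by lia.
case: a lE => [a|a] lE; last by rewrite NegzE in lE; nia.
have {}lE : (a * k + s = q * k + t)%N by lia.
have := congr1 (divn^~ k) lE; have := congr1 (modn^~ k) lE.
by rewrite !divnMDl // !modnMDl !divn_small // !modn_small // !addn0 => -> ->.
Qed.

Lemma sum_binz_shift (k n r s : nat) (F : int -> int) : (r < k)%N -> (s < k)%N ->
  \sum_(t < (2 * n + 3)%N)
     F (t%:Z - n.+1%:Z) * binz n ((t%:Z - n.+1%:Z) * k + s - r%:Z) =
  \sum_(l < n.+1) if s == ((r + l) %% k)%N then 'C(n, l)%:Z * F ((r + l) %/ k)%N else 0.
Proof.
move=> r_lt_k s_lt_k.
under eq_bigr => t _ do rewrite binzE mulr_sumr.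
rewrite exchange_big; apply: eq_bigr => l _ /=.
under eq_bigr => t _ do rewrite eqz_euclid //.
case: eqP => [_|_]; last by rewrite big1 // => t _; rewrite andbF mulr0.
have q_le_n : ((r + l) %/ k <= n)%N.
  by rewrite -ltnS ltn_divLR ?(leq_ltn_trans _ r_lt_k) //; move: (ltn_ord l); nia.
have t0_lt : ((r + l) %/ k + n.+1 < 2 * n + 3)%N by lia.
rewrite (bigD1 (Ordinal t0_lt)) //= big1 ?addr0.
  by rewrite PoszD addrK eqxx andbT mulrC.
move=> t t_neq; rewrite andbT; case: eqP => [tE|]; last by rewrite mulr0.
by case/eqP: t_neq; apply: val_inj => /=; lia.
Qed.

Lemma mulmx_sum_binz k n (a : 'rV[int]_k) (F : int -> int) (r : 'I_k) :
  \sum_(s < k) a 0 s * \sum_(t < (2 * n + 3)%N)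
      F (t%:Z - n.+1%:Z) * binz n ((t%:Z - n.+1%:Z) * k + s - r%:Z) =
  \sum_(l < n.+1) 'C(n, l)%:Z * F ((r + l) %/ k)%N * rv_at a ((r + l) %% k)%N.
Proof.
have k0 : (0 < k)%N by apply: leq_ltn_trans (ltn_ord r).
under eq_bigr => s _ do rewrite sum_binz_shift // mulr_sumr.
rewrite exchange_big; apply: eq_bigr => l _ /=.
rewrite (bigD1 (Ordinal (ltn_pmod (r + l) k0))) //= eqxx big1 ?addr0.
  by rewrite -[a 0 _]rv_at_ord /=; ring.
move=> s s_neq; case: eqP => [sE|]; last by rewrite mulr0.
by case/eqP: s_neq; apply: val_inj.
Qed.

Lemma mulmx_MkE k n (A : 'rV[int]_k) (r : 'I_k) :
  (A *m Mk k n) 0 r =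
  (-1) ^+ n * (orbitA (IAP A (A *m Xk k)) n r - IAP A (A *m Xk k) r).
Proof.
set D := A *m Xk k.
have CE : (A *m Ck k n) 0 r =
    \sum_(l < n.+1) 'C(n, l)%:Z * 1 * rv_at A ((r + l) %% k)%N.
  rewrite -(mulmx_sum_binz n A (fun=> 1)) mxE; apply: eq_bigr => s _.
  by rewrite mxE; congr (_ * _); apply: eq_bigr => t _; rewrite mul1r.
have TE : (D *m Tk k n) 0 r =
    \sum_(l < n.+1) 'C(n, l)%:Z * ((r + l) %/ k)%N * rv_at D ((r + l) %% k)%N.
  by rewrite -(mulmx_sum_binz n D id) mxE; apply: eq_bigr => s _; rewrite [Tk _ _ _ _]mxE.
rewrite /Mk /Wk !mulmxDr mulmxA mul_mx_scalar -/D.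
rewrite [LHS]mxE [X in X + _]mxE CE TE mxE addrAC -big_split /=.
have -> : IAP A D r = A 0 r.
  by rewrite IAP_nat modn_small ?divn_small // mul0r addr0 rv_at_ord.
rewrite orbitA_binomial mulrBr signrMK exprS.
under eq_bigr => l _ do rewrite -!mulrA -mulrDr mul1r -IAP_nat PoszD.
ring.
Qed.

Lemma Lker_MkE (m k n : nat) (A : 'rV[int]_k) :
  Lker m (Mk k n) A <->
  forall r : 'I_k, (m %| orbitA (IAP A (A *m Xk k)) n r - IAP A (A *m Xk k) r)%Z.
Proof.
split=> ker r; [move/eqz_modE: (ker r) | apply/eqz_modE; move: (ker r)].
all: by rewrite subr0 mulmx_MkE rpredMsign.
Qed.

Theorem theorem6 (m k : nat) (A : 'rV[int]_k) (lam p : nat) :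
  (0 < lam)%N -> (0 < p)%N -> (k %| p)%N ->
  periodic m (orbitA (IAP A (A *m Xk k))) p (lam * p)%N <->
  (pi_zero (m %/ gcdn (p %/ k) m)%N (A *m Xk k) /\ Lker m (Mk k (lam * p)%N) A).
Proof.
move=> _ p0 k_dvd_p.
have k0 : (0 < k)%N := dvdn_gt0 p0 k_dvd_p.
have N0 : (0 < p %/ k)%N by rewrite divn_gt0 // dvdn_leq.
rewrite periodic_orbitAE pi_zero_gcdE // Lker_MkE -IAP_periodic_dvdE // divnK //.
split=> [[col row] | [col row]]; split=> //.
apply: (orbitA_row_dvd k0 _ _ _ row).
- exact: IAP_antisymmetric k0.
- exact: IAP_affine_on_classes k0.
- by move=> x; apply: periodic_dvd_muln.
Qed.
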